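(* Let $R$ be a ring. The following statements are equivalent: (1) $R$ is a left localizable ring with $|\max\mathrm{Den}_l(R)|<\infty$; (2) there are left denominator sets $S_1',\ldots,S_n'$ of $R$ such that the rings $R_i:=S_i'^{-1}R$, $i=1,\ldots,n$, are division rings and the map $\sigma:=\prod_{i=1}^n\sigma_i:R\to\prod_{i=1}^nR_i$, $r\mapsto(\sigma_1(r),\ldots,\sigma_n(r))$, is injective, where $\sigma_i:R\to R_i$, $r\mapsto\frac{r}{1}$. Moreover, if these conditions hold and in (2) none of the rings $R_i$ can be omitted while preserving the injectivity of $\sigma$, then $n=|\max\mathrm{Den}_l(R)|$ and $\max\mathrm{Den}_l(R)=\{S_1,\ldots,S_n\}$, where $S_i:=\sigma_i^{-1}(R_i^* )$ and $R_i^*$ is the group of units of $R_i$.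
   Context: All rings are associative with $1$. A multiplicative subset $S$ of $R$ ($1\in S$, $0\notin S$, closed under multiplication) is a left Ore set if $Sr\cap Rs\neq\emptyset$ for all $r\in R$, $s\in S$. A left Ore set $S$ is a left denominator set if $rs=0$ ($r\in R$, $s\in S$) implies $tr=0$ for some $t\in S$; $S^{-1}R$ is the left localization. $\max\mathrm{Den}_l(R)$ is the set of maximal elements, under inclusion, of the set of left denominator sets of $R$. A ring $R$ is left localizable if every nonzero $r\in R$ lies in some left denominator set. *)

From HB Require Import structures.
From mathcomp Require Import all_boot all_order all_algebra.
From mathcomp Require Import boolp classical_sets cardinality.
Set Implicit Arguments. Unset Strict Implicit. Unset Printing Implicit Defensive.
Import GRing.Theory.
Local Open Scope ring_scope.
Local Open Scope classical_set_scope.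

Definition mult_subset (R : pzRingType) (S : set R) : Prop :=
  S 1 /\ ~ S 0 /\ (forall a b, S a -> S b -> S (a * b)).

Definition left_ore_set (R : pzRingType) (S : set R) : Prop :=
  mult_subset S /\
  (forall r s, S s -> exists s' r', S s' /\ s' * r = r' * s).

Definition left_den_set (R : pzRingType) (S : set R) : Prop :=
  left_ore_set S /\
  (forall r s, S s -> r * s = 0 -> exists t, S t /\ t * r = 0).

Definition maxDen_l (R : pzRingType) : set (set R) :=
  [set S | left_den_set S /\ (forall T, left_den_set T -> S `<=` T -> T = S)].

Definition left_localizable (R : pzRingType) : Prop :=
  forall r : R, r != 0 -> exists S, left_den_set S /\ S r.

(* (Q, sigma) is a left localization S^{-1}R of R at S (the left ring of
   fractions, characterised up to isomorphism as usual):
   sigma s is a unit for s in S, every element is (sigma s)^-1 (sigma r),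
   and ker sigma = {r | s r = 0 for some s in S}. *)
Definition is_left_localization (R : pzRingType) (S : set R)
    (Q : unitRingType) (sigma : {rmorphism R -> Q}) : Prop :=
  (forall s, S s -> sigma s \is a GRing.unit) /\
  (forall q : Q, exists s r, S s /\ q = (sigma s)^-1 * sigma r) /\
  (forall r, sigma r = 0 <-> exists s, S s /\ s * r = 0).

Definition division_ring (Q : unitRingType) : Prop :=
  forall x : Q, x != 0 -> x \is a GRing.unit.

Definition cond2_data (R : pzRingType) (n : nat) (S' : 'I_n -> set R)
    (Q : 'I_n -> unitRingType) (sigma : forall i, {rmorphism R -> Q i}) : Prop :=
  (forall i, left_den_set (S' i)) /\
  (forall i, is_left_localization (S' i) (sigma i)) /\
  (forall i, division_ring (Q i)) /\
  (forall r1 r2 : R, (forall i, sigma i r1 = sigma i r2) -> r1 = r2).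
Arguments maxDen_l : clear implicits.

From HB Require Import structures.
From mathcomp Require Import all_boot all_order all_algebra.
From mathcomp Require Import boolp classical_sets cardinality.
Set Implicit Arguments. Unset Strict Implicit. Unset Printing Implicit Defensive.
Import GRing.Theory.
Local Open Scope ring_scope.

(* (2) => (1): the preimages [U_i] of the units of the division rings [R_i]
   are left denominator sets, and every left denominator set [T] lies in some
   [U_i]: otherwise a product of elements [t_i \in T \ U_i] would be killed by
   every [sigma_i], hence be [0].  So [R] is left localizable and
   [max Den_l(R)] is among the [U_i]; irredundancy of [sigma] makes the [U_i]
   pairwise incomparable, hence all maximal.
   (1) => (2): left localizability makes [R] reduced, so vanishing products
   may be reordered.  Then two distinct maximal [S], [S'] meet in
   [S \cap ass S'] (else [S \cup S'] generates a larger left denominator set),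
   and a product of such elements gives [c \in S] lying in [ass S'] for all
   other maximal [S'].  With [c] one shows that every [x \notin ass S] lies in
   [S], so [R / ass S] is a left Ore domain whose division ring of left
   fractions is [S^-1 R].  A nonzero [r] lies in some maximal [S], which makes
   the product map injective. *)

Module LeftOreFrac.
Local Open Scope quotient_scope.
Section LeftOreDomain.
Variable D : nzRingType.
Hypothesis mul_eq0 : forall a b : D, a * b = 0 -> a = 0 \/ b = 0.
Hypothesis left_ore : forall a b : D, b != 0 -> exists u v, u != 0 /\ u * a = v * b.

Lemma mulf_neq0 (a b : D) : a != 0 -> b != 0 -> a * b != 0.
Proof. by move=> /eqP a0 /eqP b0; apply/eqP => /mul_eq0 []. Qed.

Lemma mulIf (s a b : D) : s != 0 -> a * s = b * s -> a = b.
Proof.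
move=> /eqP s0 e; apply/eqP; rewrite -subr_eq0; apply/eqP.
by case: (@mul_eq0 (a - b) s) => //; rewrite mulrBl e subrr.
Qed.

Lemma mulfI (s a b : D) : s != 0 -> s * a = s * b -> a = b.
Proof.
move=> /eqP s0 e; apply/eqP; rewrite -subr_eq0; apply/eqP.
by case: (@mul_eq0 s (a - b)) => //; rewrite mulrBr e subrr.
Qed.

(* A choice of Ore multipliers, made total by accepting anything when [b = 0]. *)
Lemma ore_pair (a b : D) :
  exists uv : D * D, (uv.1 != 0) && ((b == 0) || (uv.1 * a == uv.2 * b)).
Proof.
have [->|b0] := eqVneq b 0; first by exists (1, 0); rewrite /= oner_neq0.
by have [u [v [u0 e]]] := left_ore a b0; exists (u, v); rewrite /= u0 e eqxx.
Qed.

Definition orec a b := xchoose (ore_pair a b).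

Variant orec_spec (a b : D) : D * D -> Prop :=
  OrecSpec u v of u != 0 & u * a = v * b : orec_spec a b (u, v).

Lemma orecP a b : b != 0 -> orec_spec a b (orec a b).
Proof.
move=> b0; have /andP[] := xchooseP (ore_pair a b); rewrite /orec.
case: (xchoose (ore_pair a b)) => u v /= u0; rewrite (negbTE b0) /= => /eqP; exact: OrecSpec.
Qed.
Arguments orecP a [b].

(* A fraction [Fr s r] stands for [s^-1 r]. *)
Definition frac := {p : D * D | p.1 != 0}.
Definition frac0 : frac := exist _ (1, 0) (oner_neq0 D).
Definition Fr (s r : D) : frac := insubd frac0 (s, r).
Definition den (x : frac) := (val x).1.
Definition num (x : frac) := (val x).2.

Lemma denP x : den x != 0. Proof. exact: valP x. Qed.
Lemma den_Fr s r : s != 0 -> den (Fr s r) = s.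
Proof. by move=> s0; rewrite /den /Fr val_insubd /= s0. Qed.
Lemma num_Fr s r : s != 0 -> num (Fr s r) = r.
Proof. by move=> s0; rewrite /num /Fr val_insubd /= s0. Qed.

(* [s^-1 r = s'^-1 r'] iff every common left multiple [u s = v s'] gives [u r = v r']. *)
Definition eqv_prop (x y : frac) :=
  forall u v, u * den x = v * den y -> u * num x = v * num y.
Definition eqv x y : bool := `[< eqv_prop x y >].

Lemma eqvP x y : reflect (eqv_prop x y) (eqv x y).
Proof. exact: asboolP. Qed.

Lemma eqv_witness (x y : frac) u v : u != 0 ->
  u * den x = v * den y -> u * num x = v * num y -> eqv x y.
Proof.
move=> u0 e1 e2; apply/eqvP => a b e.
have [c [d [c0 cd]]] := left_ore a u0.
have dvcb : d * v = c * b.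
  by apply: (mulIf (denP y)); rewrite -mulrA -e1 mulrA -cd -!mulrA e.
by apply: (mulfI c0); rewrite mulrA cd -mulrA e2 mulrA dvcb -mulrA.
Qed.

Lemma eqv_refl : reflexive eqv.
Proof. by move=> x; apply/eqvP => u v e; rewrite (mulIf (denP x) e). Qed.

Lemma eqv_sym : symmetric eqv.
Proof. by move=> x y; apply/eqvP/eqvP => H u v e; rewrite (H v u (esym e)). Qed.

Lemma eqv_trans : transitive eqv.
Proof.
move=> y x z /eqvP xy /eqvP yz; apply/eqvP => u w e.
have [u0|u0] := eqVneq u 0.
  have w0 : w = 0 by apply: (mulIf (denP z)); rewrite -e u0 !mul0r.
  by rewrite u0 w0 !mul0r.
have [s' [r' [s0 e1]]] := left_ore (den y) (mulf_neq0 u0 (denP x)).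
have r0 : r' != 0.
  apply: contra_eqN e1 => /eqP ->; rewrite mul0r.
  exact: mulf_neq0 s0 (denP y).
have e2 : r' * u * num x = s' * num y by apply: xy; rewrite -mulrA -e1.
have e3 : s' * num y = r' * w * num z by apply: yz; rewrite e1 -mulrA e mulrA.
by apply: (mulfI r0); rewrite mulrA e2 e3 mulrA.
Qed.

Canonical eqv_equiv := EquivRel eqv eqv_refl eqv_sym eqv_trans.
Definition type := {eq_quot eqv}.
HB.instance Definition _ : EqQuotient _ eqv type := EqQuotient.on type.
HB.instance Definition _ := Choice.on type.

Lemma eqv_repr x : eqv (repr (\pi_type x)) x.
Proof. by rewrite -eqmodE reprK. Qed.

(* [s^-1 r + s'^-1 r' = (u s)^-1 (u r + v r')] and
   [(s^-1 r) (s'^-1 r') = (u s)^-1 (v r')] where [u s = v s'], resp. [u r = v s']. *)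
Definition addf (x y : frac) : frac :=
  let uv := orec (den x) (den y) in Fr (uv.1 * den x) (uv.1 * num x + uv.2 * num y).
Definition oppf (x : frac) : frac := Fr (den x) (- num x).
Definition mulf (x y : frac) : frac :=
  let uv := orec (num x) (den y) in Fr (uv.1 * den x) (uv.2 * num y).
Definition invf (x : frac) : frac := if num x != 0 then Fr (num x) (den x) else x.
Definition unitf (x : frac) : bool := num x != 0.

Lemma den_addf x y : den (addf x y) = (orec (den x) (den y)).1 * den x.
Proof. by rewrite /addf; case: (orecP (den x) (denP y)) => u v u0 _ /=; rewrite den_Fr ?mulf_neq0 ?denP. Qed.
Lemma num_addf x y : num (addf x y) =
  (orec (den x) (den y)).1 * num x + (orec (den x) (den y)).2 * num y.
Proof. by rewrite /addf; case: (orecP (den x) (denP y)) => u v u0 _ /=; rewrite num_Fr ?mulf_neq0 ?denP. Qed.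
Lemma den_mulf x y : den (mulf x y) = (orec (num x) (den y)).1 * den x.
Proof. by rewrite /mulf; case: (orecP (num x) (denP y)) => u v u0 _ /=; rewrite den_Fr ?mulf_neq0 ?denP. Qed.
Lemma num_mulf x y : num (mulf x y) = (orec (num x) (den y)).2 * num y.
Proof. by rewrite /mulf; case: (orecP (num x) (denP y)) => u v u0 _ /=; rewrite num_Fr ?mulf_neq0 ?denP. Qed.
Lemma den_oppf x : den (oppf x) = den x.
Proof. by rewrite /oppf den_Fr // denP. Qed.
Lemma num_oppf x : num (oppf x) = - num x.
Proof. by rewrite /oppf num_Fr // denP. Qed.
Lemma den_Fr1 r : den (Fr 1 r) = 1. Proof. by rewrite den_Fr // oner_neq0. Qed.
Lemma num_Fr1 r : num (Fr 1 r) = r. Proof. by rewrite num_Fr // oner_neq0. Qed.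

Lemma addf_eqv x x' y y' : eqv x x' -> eqv y y' -> eqv (addf x y) (addf x' y').
Proof.
move=> /eqvP xx /eqvP yy; apply/eqvP => a b.
rewrite !(den_addf, num_addf).
case: (orecP (den x) (denP y)) => u v _ e /=.
case: (orecP (den x') (denP y')) => u' v' _ e' /= ab.
rewrite !mulrDr !mulrA (xx (a * u) (b * u')); last by rewrite -!mulrA.
by rewrite (yy (a * v) (b * v')) // -!mulrA -e -e' !mulrA -!mulrA.
Qed.

Lemma oppf_eqv x x' : eqv x x' -> eqv (oppf x) (oppf x').
Proof.
move=> /eqvP xx; apply/eqvP => a b; rewrite !den_oppf !num_oppf !mulrN.
by move/xx ->.
Qed.

Lemma mulf_eqv x x' y y' : eqv x x' -> eqv y y' -> eqv (mulf x y) (mulf x' y').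
Proof.
move=> /eqvP xx /eqvP yy; apply/eqvP => a b.
rewrite !(den_mulf, num_mulf).
case: (orecP (num x) (denP y)) => u v _ e /=.
case: (orecP (num x') (denP y')) => u' v' _ e' /= ab.
rewrite !mulrA; apply: yy; rewrite -!mulrA -e -e' !mulrA.
by apply: xx; rewrite -!mulrA.
Qed.

Lemma num_eq0_eqv x x' : eqv x x' -> (num x == 0) = (num x' == 0).
Proof.
move=> /eqvP xx; have [u [v [u0 e]]] := left_ore (den x) (denP x').
have v0 : v != 0.
  by apply: contra_eqN e => /eqP ->; rewrite mul0r mulf_neq0 ?denP.
have e2 := xx u v e.
apply/eqP/eqP => h.
  by apply: (mulfI v0); rewrite -e2 h !mulr0.
by apply: (mulfI u0); rewrite e2 h !mulr0.
Qed.

Lemma invf_eqv x x' : eqv x x' -> eqv (invf x) (invf x').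
Proof.
move=> xx; rewrite /invf -(num_eq0_eqv xx); case: ifP => // n0.
have n0' : num x' != 0 by rewrite -(num_eq0_eqv xx) n0.
move/eqvP: xx => xx; have [u [v [u0 e]]] := left_ore (den x) (denP x').
by apply: (@eqv_witness _ _ u v u0); rewrite ?den_Fr ?num_Fr //; apply: xx.
Qed.

Lemma unitf_eqv x x' : eqv x x' -> unitf x = unitf x'.
Proof. by move=> xx; rewrite /unitf (num_eq0_eqv xx). Qed.

Definition zero : type := lift_cst type (Fr 1 0).
Definition one : type := lift_cst type (Fr 1 1).
Definition add := lift_op2 type addf.
Definition opp := lift_op1 type oppf.
Definition mul := lift_op2 type mulf.
Definition inv := lift_op1 type invf.
Definition unit := lift_fun1 type unitf.

Lemma pi_add : {morph \pi : x y / addf x y >-> add x y}.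
Proof.
move=> x y; unlock add; apply/eqmodP => /=.
by apply: addf_eqv; rewrite eqv_sym eqv_repr.
Qed.
Canonical pi_add_morph := PiMorph2 pi_add.
Lemma pi_opp : {morph \pi : x / oppf x >-> opp x}.
Proof.
move=> x; unlock opp; apply/eqmodP => /=.
by apply: oppf_eqv; rewrite eqv_sym eqv_repr.
Qed.
Canonical pi_opp_morph := PiMorph1 pi_opp.
Lemma pi_mul : {morph \pi : x y / mulf x y >-> mul x y}.
Proof.
move=> x y; unlock mul; apply/eqmodP => /=.
by apply: mulf_eqv; rewrite eqv_sym eqv_repr.
Qed.
Canonical pi_mul_morph := PiMorph2 pi_mul.
Lemma pi_inv : {morph \pi : x / invf x >-> inv x}.
Proof.
move=> x; unlock inv; apply/eqmodP => /=.
by apply: invf_eqv; rewrite eqv_sym eqv_repr.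
Qed.
Canonical pi_inv_morph := PiMorph1 pi_inv.
Lemma pi_unit x : unit (\pi_type x) = unitf x.
Proof. by unlock unit; apply: unitf_eqv; exact: eqv_repr. Qed.
Canonical pi_zero_morph := PiConst zero.
Canonical pi_one_morph := PiConst one.
Lemma addfA : associative add.
Proof.
elim/quotW=> x; elim/quotW=> y; elim/quotW=> z; rewrite !piE.
apply/eqmodP; rewrite /= eqv_sym; apply/eqvP => c d.
rewrite !(den_addf, num_addf).
case: (orecP (den x) (denP y)) => u v _ e /=.
case: (orecP (den y) (denP z)) => a b a0 e2 /=.
case: (orecP (u * den x) (denP z)) => u' v' _ e3 /=.
case: (orecP (den x) (mulf_neq0 a0 (denP y))) => a' b' _ e4 /= H.
have E1 : c * u' * u = d * a' by apply: (mulIf (denP x)); rewrite -!mulrA H.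
have E2 : c * u' * v = d * b' * a.
  by apply: (mulIf (denP y)); rewrite -!mulrA -e !mulrA E1 -!mulrA e4 !mulrA.
have E3 : c * v' = d * b' * b.
  by apply: (mulIf (denP z)); rewrite -!mulrA -e3 !mulrA E1 -!mulrA e4 e2 !mulrA.
by rewrite !mulrDr !mulrA E1 E3 -addrA E2.
Qed.

Lemma addfC : commutative add.
Proof.
elim/quotW=> x; elim/quotW=> y; rewrite !piE.
apply/eqmodP => /=; apply/eqvP => c d.
rewrite !(den_addf, num_addf).
case: (orecP (den x) (denP y)) => u v _ e /=.
case: (orecP (den y) (denP x)) => a b _ e2 /= H.
have E1 : c * v = d * a by apply: (mulIf (denP y)); rewrite -!mulrA -e H.
have E2 : c * u = d * b by apply: (mulIf (denP x)); rewrite -!mulrA H e2.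
by rewrite !mulrDr !mulrA E1 E2 addrC.
Qed.

Lemma add0f : left_id zero add.
Proof.
elim/quotW=> x; rewrite !piE.
apply/eqmodP => /=; apply/eqvP => c d.
rewrite !(den_addf, num_addf) den_Fr1 num_Fr1.
case: (orecP 1 (denP x)) => u v _ e /= H.
rewrite mulr0 add0r mulrA; congr (_ * _).
by apply: (mulIf (denP x)); rewrite -mulrA -e -H.
Qed.

Lemma addNf : left_inverse zero opp add.
Proof.
elim/quotW=> x; rewrite !piE.
apply/eqmodP => /=; apply/eqvP => c d.
rewrite !(den_addf, num_addf) den_Fr1 num_Fr1 den_oppf num_oppf.
case: (orecP (den x) (denP x)) => u v _ e /= _.
by rewrite (mulIf (denP x) e) mulrN addNr !mulr0.
Qed.

HB.instance Definition _ := GRing.isZmodule.Build type addfA addfC add0f addNf.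

Lemma mulfA : associative mul.
Proof.
elim/quotW=> x; elim/quotW=> y; elim/quotW=> z; rewrite !piE.
apply/eqmodP; rewrite /= eqv_sym; apply/eqvP => c d.
rewrite !(den_mulf, num_mulf).
case: (orecP (num x) (denP y)) => u v _ e /=.
case: (orecP (num y) (denP z)) => a b a0 e2 /=.
case: (orecP (v * num y) (denP z)) => u' v' _ e3 /=.
case: (orecP (num x) (mulf_neq0 a0 (denP y))) => a' b' _ e4 /= H.
have E1 : c * u' * u = d * a' by apply: (mulIf (denP x)); rewrite -!mulrA H.
have E2 : c * u' * v = d * b' * a.
  by apply: (mulIf (denP y)); rewrite -!mulrA -e !mulrA E1 -!mulrA e4 !mulrA.
have E3 : c * v' = d * b' * b.
  by apply: (mulIf (denP z)); rewrite -!mulrA -e3 !mulrA E2 -!mulrA e2 !mulrA.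
by rewrite !mulrA E3.
Qed.

Lemma mul1f : left_id one mul.
Proof.
elim/quotW=> x; rewrite !piE.
apply/eqmodP => /=; apply/eqvP => c d.
rewrite !(den_mulf, num_mulf) den_Fr1 num_Fr1.
case: (orecP 1 (denP x)) => u v _ e /= H.
rewrite mulrA; congr (_ * _).
by apply: (mulIf (denP x)); rewrite -mulrA -e -H.
Qed.

Lemma mulf1 : right_id one mul.
Proof.
elim/quotW=> x; rewrite !piE.
apply/eqmodP => /=; apply/eqvP => c d.
rewrite !(den_mulf, num_mulf) den_Fr1 num_Fr1.
case: (orecP (num x) (oner_neq0 D)) => u v _ e /= H.
have E : c * u = d by apply: (mulIf (denP x)); rewrite -mulrA H.
by rewrite mulr1 -E -mulrA e mulr1.
Qed.

Lemma mulfDl : left_distributive mul add.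
Proof.
elim/quotW=> x; elim/quotW=> y; elim/quotW=> z; rewrite !piE.
apply/eqmodP => /=; apply/eqvP => c d.
rewrite !(den_mulf, num_mulf, den_addf, num_addf).
case: (orecP (den x) (denP y)) => u v _ e /=.
case: (orecP (num x) (denP z)) => a b _ e2 /=.
case: (orecP (num y) (denP z)) => e' f e0 e3 /=.
case: (orecP (u * num x + v * num y) (denP z)) => p q _ e4 /=.
case: (orecP (a * den x) (mulf_neq0 e0 (denP y))) => g h _ e5 /= H.
have E1 : c * p * u = d * g * a by apply: (mulIf (denP x)); rewrite -!mulrA H.
have E2 : c * p * v = d * h * e'.
  by apply: (mulIf (denP y)); rewrite -!mulrA -e !mulrA E1 -!mulrA e5 !mulrA.
have E3 : c * q = d * g * b + d * h * f.
  apply: (mulIf (denP z)).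
  by rewrite mulrDl -!mulrA -e4 -e2 -e3 !mulrDr !mulrA E1 E2.
by rewrite !mulrA E3 mulrDl !mulrDr !mulrA.
Qed.

Lemma mulfDr : right_distributive mul add.
Proof.
elim/quotW=> x; elim/quotW=> y; elim/quotW=> z; rewrite !piE.
apply/eqmodP => /=; apply/eqvP => c d.
rewrite !(den_mulf, num_mulf, den_addf, num_addf).
case: (orecP (den y) (denP z)) => u v u0 e /=.
case: (orecP (num x) (denP y)) => a b _ e2 /=.
case: (orecP (num x) (denP z)) => e' f e0 e3 /=.
case: (orecP (num x) (mulf_neq0 u0 (denP y))) => p q _ e4 /=.
case: (orecP (a * den x) (mulf_neq0 e0 (denP x))) => g h _ e5 /= H.
have E1 : c * p = d * g * a by apply: (mulIf (denP x)); rewrite -!mulrA H.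
have E0 : g * a = h * e' by apply: (mulIf (denP x)); rewrite -!mulrA e5.
have E2 : c * q * u = d * g * b.
  by apply: (mulIf (denP y)); rewrite -!mulrA -e4 -e2 !mulrA E1.
have E3 : c * q * v = d * h * f.
  apply: (mulIf (denP z)); rewrite -!mulrA -e -e3 !mulrA E2.
  by rewrite -!mulrA -e2 !mulrA -(mulrA d g a) E0 !mulrA.
by rewrite mulrDr !mulrDr !mulrA E2 E3.
Qed.

Lemma one_neq0 : one != zero.
Proof.
rewrite !piE; apply/negP => /eqvP /(_ 1 1).
by rewrite !den_Fr1 !num_Fr1 => /(_ erefl); rewrite !mul1r; exact/eqP/oner_neq0.
Qed.

HB.instance Definition _ := GRing.Zmodule_isNzRing.Build type
  mulfA mul1f mulf1 mulfDl mulfDr one_neq0.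

Lemma mulVf : {in unit, left_inverse one inv mul}.
Proof.
elim/quotW=> x; rewrite /in_mem /= pi_unit /unitf => nx; rewrite !piE.
apply/eqmodP; rewrite /= /invf nx; apply/eqvP => c d.
rewrite den_mulf num_mulf den_Fr1 num_Fr1 den_Fr // num_Fr //.
case: (orecP (den x) (denP x)) => u v _ e /=.
by rewrite -(mulIf (denP x) e).
Qed.

Lemma divff : {in unit, right_inverse one inv mul}.
Proof.
elim/quotW=> x; rewrite /in_mem /= pi_unit /unitf => nx; rewrite !piE.
apply/eqmodP; rewrite /= /invf nx; apply/eqvP => c d.
rewrite den_mulf num_mulf den_Fr1 num_Fr1 num_Fr // den_Fr //.
case: (orecP (num x) nx) => u v _ e /=.
by rewrite -(mulIf nx e).
Qed.

Lemma unitfP : forall x y, mul y x = one /\ mul x y = one -> unit x.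
Proof.
elim/quotW=> x; elim/quotW=> y; rewrite pi_unit /unitf !piE.
move=> -[/eqmodP/eqvP yx1 _]; apply: contraT => /negPn/eqP nx0.
have [a [b [a0 e]]] := left_ore (den (mulf y x)) (oner_neq0 D).
rewrite -(den_Fr1 1) in e.
have := yx1 a b e; rewrite num_Fr1 num_mulf nx0 !mulr0 mulr1 => b0.
by move: e; rewrite -b0 mul0r => /eqP; rewrite (negbTE (mulf_neq0 a0 (denP _))).
Qed.

Lemma invf_out : {in [predC unit], inv =1 id}.
Proof.
elim/quotW=> x; rewrite /in_mem /= pi_unit /unitf => nx; rewrite !piE.
by rewrite /invf (negbTE nx).
Qed.

HB.instance Definition _ := GRing.NzRing_hasMulInverse.Build type
  mulVf divff unitfP invf_out.

Definition tofr (d : D) : type := \pi_type (Fr 1 d).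

Lemma tofr_inj : injective tofr.
Proof.
by move=> a b /eqmodP /eqvP /(_ 1 1); rewrite !den_Fr1 !num_Fr1 !mul1r => /(_ erefl).
Qed.

Lemma tofr_is_zmod_morphism : zmod_morphism tofr.
Proof.
move=> a b; have -> : tofr a - tofr b = add (tofr a) (opp (tofr b)) by [].
rewrite /tofr -pi_opp -pi_add; apply/eqmodP => /=; apply/eqvP => c d.
rewrite den_Fr1 num_Fr1 den_addf num_addf den_oppf num_oppf !den_Fr1 !num_Fr1.
case: (orecP 1 (oner_neq0 D)) => u v _ e /=.
by rewrite !mulr1 in e * => H; rewrite -e H mulrN -mulrBr mulrA.
Qed.

HB.instance Definition _ :=
  GRing.isZmodMorphism.Build D type tofr tofr_is_zmod_morphism.

Lemma tofr_is_monoid_morphism : monoid_morphism tofr.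
Proof.
split; first by rewrite /tofr; have -> : (1 : type) = one by []; rewrite /one -lock.
move=> a b; have -> : tofr a * tofr b = mul (tofr a) (tofr b) by [].
rewrite /tofr -pi_mul; apply/eqmodP => /=; apply/eqvP => c d.
rewrite den_Fr1 num_Fr1 den_mulf num_mulf !den_Fr1 !num_Fr1.
case: (orecP a (oner_neq0 D)) => u v _ e /=.
by rewrite mulr1 in e; rewrite !mulr1 => H; rewrite -e H !mulrA.
Qed.

HB.instance Definition _ :=
  GRing.isMonoidMorphism.Build D type tofr tofr_is_monoid_morphism.

Lemma tofr_unit d : (tofr d \is a GRing.unit) = (d != 0).
Proof. by rewrite [_ \is a _]pi_unit /unitf num_Fr1. Qed.

Lemma tofr_frac (q : type) : exists s r, s != 0 /\ q = (tofr s)^-1 * tofr r.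
Proof.
elim/quotW: q => x; exists (den x), (num x); split; first exact: denP.
have -> : (tofr (den x))^-1 * tofr (num x) = mul (inv (tofr (den x))) (tofr (num x)).
  by [].
rewrite /tofr -pi_inv -pi_mul; apply/eqmodP; rewrite /= /invf num_Fr1 (denP x).
apply/eqvP => c d.
rewrite den_mulf num_mulf !den_Fr1 !num_Fr1 num_Fr ?denP // den_Fr ?denP //.
case: (orecP 1 (oner_neq0 D)) => u v _ e /=.
rewrite !mulr1 in e => H; rewrite -e mulrA; congr (_ * _).
by apply: (mulIf (denP x)); rewrite -mulrA.
Qed.

Lemma neq0_unit (q : type) : q != 0 -> q \is a GRing.unit.
Proof.
elim/quotW: q => x; apply: contraNT; rewrite [_ \is a _]pi_unit /unitf negbK => /eqP n0.
have -> : (0 : type) = \pi_type (Fr 1 0) by rewrite [LHS]/GRing.zero /= /zero -lock.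
by apply/eqP/eqmodP/eqvP => c d; rewrite den_Fr1 num_Fr1 n0 !mulr0.
Qed.

End LeftOreDomain.
End LeftOreFrac.
HB.export LeftOreFrac.

Module RingQuot.
Local Open Scope quotient_scope.
Section TwoSidedIdeal.
Variables (R : pzRingType) (I : R -> Prop).

Record proper_ideal : Prop := ProperIdeal {
  ideal0 : I 0;
  idealB : forall x y, I x -> I y -> I (x - y);
  idealMl : forall x y, I y -> I (x * y);
  idealMr : forall x y, I x -> I (x * y);
  ideal_not1 : ~ I 1 }.

Hypothesis hI : proper_ideal.

Lemma idealN x : I x -> I (- x).
Proof. by move=> h; rewrite -sub0r; apply: idealB => //; exact: ideal0. Qed.

Lemma idealD x y : I x -> I y -> I (x + y).
Proof. by move=> hx hy; rewrite -[y]opprK; apply: idealB => //; exact: idealN. Qed.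

Definition eqI (x y : R) : bool := `[< I (x - y) >].

Lemma eqI_refl : reflexive eqI.
Proof. by move=> x; apply/asboolP; rewrite subrr; exact: ideal0. Qed.
Lemma eqI_sym : symmetric eqI.
Proof. by move=> x y; apply/asboolP/asboolP => h; rewrite -opprB; exact: idealN. Qed.
Lemma eqI_trans : transitive eqI.
Proof.
move=> y x z /asboolP h1 /asboolP h2; apply/asboolP.
by have := idealD h1 h2; rewrite addrA subrK.
Qed.

Canonical eqI_equiv := EquivRel eqI eqI_refl eqI_sym eqI_trans.
Definition type := {eq_quot eqI}.
HB.instance Definition _ : EqQuotient _ eqI type := EqQuotient.on type.
HB.instance Definition _ := Choice.on type.

Lemma repr_pi x : I (repr (\pi_type x) - x).
Proof. by have /eqmodP/asboolP := reprK (\pi_type x). Qed.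

Definition zero : type := lift_cst type 0.
Definition one : type := lift_cst type 1.
Definition add := lift_op2 type +%R.
Definition opp := lift_op1 type -%R.
Definition mul := lift_op2 type *%R.

Lemma pi_add : {morph \pi : x y / x + y >-> add x y}.
Proof.
move=> x y; unlock add; apply/eqmodP/asboolP.
by rewrite opprD addrACA; apply: idealD; rewrite -opprB; apply: idealN; exact: repr_pi.
Qed.
Canonical pi_add_morph := PiMorph2 pi_add.
Lemma pi_opp : {morph \pi : x / - x >-> opp x}.
Proof. by move=> x; unlock opp; apply/eqmodP/asboolP; rewrite opprK addrC; exact: repr_pi. Qed.
Canonical pi_opp_morph := PiMorph1 pi_opp.
Lemma pi_mul : {morph \pi : x y / x * y >-> mul x y}.
Proof.
move=> x y; unlock mul; apply/eqmodP/asboolP.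
set x' := repr _; set y' := repr _.
have -> : x * y - x' * y' = (x - x') * y + x' * (y - y').
  by rewrite mulrBl mulrBr addrA subrK.
by apply: idealD; [apply: (idealMr hI) | apply: (idealMl hI)];
  rewrite -opprB; apply: idealN; exact: repr_pi.
Qed.
Canonical pi_mul_morph := PiMorph2 pi_mul.
Canonical pi_zero_morph := PiConst zero.
Canonical pi_one_morph := PiConst one.

Lemma addqA : associative add.
Proof. by elim/quotW=> x; elim/quotW=> y; elim/quotW=> z; rewrite !piE addrA. Qed.
Lemma addqC : commutative add.
Proof. by elim/quotW=> x; elim/quotW=> y; rewrite !piE addrC. Qed.
Lemma add0q : left_id zero add.
Proof. by elim/quotW=> x; rewrite !piE add0r. Qed.
Lemma addNq : left_inverse zero opp add.
Proof. by elim/quotW=> x; rewrite !piE addNr. Qed.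
HB.instance Definition _ := GRing.isZmodule.Build type addqA addqC add0q addNq.

Lemma mulqA : associative mul.
Proof. by elim/quotW=> x; elim/quotW=> y; elim/quotW=> z; rewrite !piE mulrA. Qed.
Lemma mul1q : left_id one mul.
Proof. by elim/quotW=> x; rewrite !piE mul1r. Qed.
Lemma mulq1 : right_id one mul.
Proof. by elim/quotW=> x; rewrite !piE mulr1. Qed.
Lemma mulqDl : left_distributive mul add.
Proof. by elim/quotW=> x; elim/quotW=> y; elim/quotW=> z; rewrite !piE mulrDl. Qed.
Lemma mulqDr : right_distributive mul add.
Proof. by elim/quotW=> x; elim/quotW=> y; elim/quotW=> z; rewrite !piE mulrDr. Qed.
Lemma one_neq0 : one != zero.
Proof. by rewrite !piE; apply/negP => /asboolP; rewrite subr0; exact: ideal_not1. Qed.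
HB.instance Definition _ := GRing.Zmodule_isNzRing.Build type
  mulqA mul1q mulq1 mulqDl mulqDr one_neq0.

Definition proj (x : R) : type := \pi_type x.

Lemma proj_is_zmod_morphism : zmod_morphism proj.
Proof.
move=> a b; have -> : proj a - proj b = add (proj a) (opp (proj b)) by [].
by rewrite /proj -pi_opp -pi_add.
Qed.
HB.instance Definition _ := GRing.isZmodMorphism.Build R type proj proj_is_zmod_morphism.

Lemma proj_is_monoid_morphism : monoid_morphism proj.
Proof.
split; first by rewrite /proj; have -> : (1 : type) = one by []; rewrite /one -lock.
move=> a b; have -> : proj a * proj b = mul (proj a) (proj b) by [].
by rewrite /proj -pi_mul.
Qed.
HB.instance Definition _ := GRing.isMonoidMorphism.Build R type proj proj_is_monoid_morphism.

Lemma proj_eq0 x : proj x = 0 <-> I x.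
Proof.
rewrite -(rmorph0 proj); split => [/eqmodP/asboolP|h]; first by rewrite subr0.
by apply/eqmodP/asboolP; rewrite subr0.
Qed.

Lemma proj_surj (q : type) : exists x, q = proj x.
Proof. by elim/quotW: q => x; exists x. Qed.

End TwoSidedIdeal.
End RingQuot.
HB.export RingQuot.

Local Open Scope classical_set_scope.

Section DenominatorSets.
Variable R : pzRingType.
Implicit Types S T : set R.

Definition ass S : set R := [set r | exists s, S s /\ s * r = 0].

Lemma den1 S : left_den_set S -> S 1. Proof. by case=> [[[]]]. Qed.
Lemma den_not0 S : left_den_set S -> ~ S 0. Proof. by case=> [[[_ []]]]. Qed.
Lemma denM S : left_den_set S -> forall a b, S a -> S b -> S (a * b).
Proof. by case=> [[[_ []]]]. Qed.
Lemma den_ore S : left_den_set S ->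
  forall r s, S s -> exists s' r', S s' /\ s' * r = r' * s.
Proof. by case=> [[]]. Qed.
Lemma den_rev S : left_den_set S ->
  forall r s, S s -> r * s = 0 -> exists t, S t /\ t * r = 0.
Proof. by case. Qed.

Lemma den_prod S n (F : 'I_n -> R) : left_den_set S ->
  (forall i, S (F i)) -> S (\prod_(i < n) F i).
Proof. by move=> hS hF; apply: big_ind => //; [exact: den1 | exact: denM]. Qed.

Lemma ass_ideal S : left_den_set S -> RingQuot.proper_ideal (ass S).
Proof.
move=> hS; split.
- by exists 1; rewrite mulr0; split => //; exact: den1.
- move=> x y [s1 [h1 e1]] [s2 [h2 e2]].
  have [s' [r' [hs' e]]] := den_ore hS s2 h1.
  exists (s' * s2); split; first exact: denM.
  by rewrite mulrBr -!mulrA e2 mulr0 subr0 mulrA e -mulrA e1 mulr0.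
- move=> x y [s [h e]]; have [s' [r' [hs' e']]] := den_ore hS x h.
  by exists s'; split => //; rewrite mulrA e' -mulrA e mulr0.
- by move=> x y [s [h e]]; exists s; split => //; rewrite mulrA e mul0r.
- by move=> [s [hs]]; rewrite mulr1 => s0; apply: (den_not0 hS); rewrite -s0.
Qed.

Lemma den_notin_ass S : left_den_set S -> forall x, S x -> ~ ass S x.
Proof.
by move=> hS x hx [s [hs e]]; apply: (den_not0 hS); rewrite -e; exact: denM.
Qed.

End DenominatorSets.

Lemma prod_mem_ideal (A : pzRingType) (I : set A) n (F : 'I_n -> A) j :
  (forall x y, I y -> I (x * y)) -> (forall x y, I x -> I (x * y)) ->
  I (F j) -> I (\prod_(i < n) F i).
Proof.
move=> hl hr; elim: n F j => [|n IH] F j; first by case: j.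
rewrite big_ord_recl; case: (unliftP ord0 j) => [j' ->|->] h.
  by apply: hl; exact: (IH (fun i => F (lift ord0 i)) j').
exact: hr.
Qed.

Section LocalizationUnits.
Variables (R : pzRingType) (S : set R) (Q : unitRingType) (sigma : {rmorphism R -> Q}).
Hypothesis hloc : is_left_localization S sigma.

Lemma left_den_unit_preim : left_den_set [set r | sigma r \is a GRing.unit].
Proof.
have [hu [hf hk]] := hloc.
split; [split; [split; [|split]|]|] => /=.
- by rewrite rmorph1 unitr1.
- by rewrite rmorph0 unitr0.
- by move=> a b ha hb; rewrite rmorphM unitrMl.
- move=> r s hs.
  have [t [u [ht e]]] := hf (sigma r * (sigma s)^-1).
  have e2 : sigma (t * r - u * s) = 0.
    rewrite rmorphB !rmorphM; apply/eqP; rewrite subr_eq0; apply/eqP.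
    rewrite (_ : sigma u = sigma t * (sigma r * (sigma s)^-1)).
      by rewrite -!mulrA mulVr ?mulr1.
    by rewrite e mulrA divrr ?hu // mul1r.
  have [t' [ht' e3]] := (hk _).1 e2.
  exists (t' * t), (t' * u); split; first by rewrite rmorphM unitrMl ?hu.
  by apply/eqP; rewrite -subr_eq0 -!mulrA -mulrBr e3.
- move=> r s hs /(congr1 sigma); rewrite rmorphM rmorph0 => e.
  have /(hk _).1 [t [ht e']] : sigma r = 0.
    by rewrite -[sigma r]mulr1 -(divrr hs) mulrA e mul0r.
  by exists t; split => //; rewrite hu.
Qed.

End LocalizationUnits.

Section DivisionLocalizationFamily.
Variables (R : pzRingType) (n : nat) (S' : 'I_n -> set R) (Q : 'I_n -> unitRingType)
  (sigma : forall i, {rmorphism R -> Q i}).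
Hypothesis H : cond2_data S' sigma.

Local Notation U i := [set r | sigma i r \is a GRing.unit].

Lemma unit_preimE i r : U i r <-> sigma i r != 0.
Proof.
case: H => _ [_ [hd _]]; split => [|/hd //].
by apply: contraTneq => /= ->; rewrite unitr0.
Qed.

Lemma cond2_inj r1 r2 : (forall i, sigma i r1 = sigma i r2) -> r1 = r2.
Proof. by case: H => _ [_ [_ hi]]; exact: hi. Qed.

Lemma left_den_U i : left_den_set (U i).
Proof. by case: H => _ [hl _]; exact: left_den_unit_preim. Qed.

(* Otherwise the product of witnesses [t_i \in T \ U i] lies in [T] but has
   all images [sigma i] equal to [0]. *)
Lemma left_den_sub_U T : left_den_set T -> exists i, T `<=` U i.
Proof.
move=> hT; apply: contrapT => hn.
have /choice [t ht] : forall i, exists x, T x /\ ~ U i x.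
  move=> i; apply: contrapT => hh; apply: hn; exists i => x Tx.
  by apply: contrapT => Ux; apply: hh; exists x.
apply: (den_not0 hT); suff <- : \prod_(i < n) t i = 0.
  by apply: den_prod => // i; case: (ht i).
apply: cond2_inj => j; rewrite rmorph0 rmorph_prod.
apply: (@prod_mem_ideal _ [set 0] _ _ j) => /= [x y ->|x y ->|].
- exact: mulr0.
- exact: mul0r.
by case: (ht j) => _ /unit_preimE/negP; rewrite negbK => /eqP.
Qed.

Lemma cond2_localizable : left_localizable R.
Proof.
move=> r r0.
have [i hi] : exists i, sigma i r != 0.
  apply: contrapT => hn; move/eqP: r0; apply; apply: cond2_inj => i.
  by rewrite rmorph0; apply/eqP; apply: contrapT => /negP hi; apply: hn; exists i.
by exists (U i); split; [exact: left_den_U | apply/unit_preimE].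
Qed.

Lemma maxDen_sub_U : maxDen_l R `<=` [set U i | i in [set: 'I_n]].
Proof.
move=> S [hS hmax]; have [i hi] := left_den_sub_U hS.
by exists i => //; apply: hmax => //; exact: left_den_U.
Qed.

Lemma cond2_finite_maxDen : finite_set (maxDen_l R).
Proof.
by apply: sub_finite_set maxDen_sub_U _; apply: finite_image; exact: finite_finset.
Qed.

Hypothesis irredundant : forall j : 'I_n, ~ (forall r1 r2 : R,
  (forall i, i != j -> sigma i r1 = sigma i r2) -> r1 = r2).

(* If [U i \subset U j] with [i != j], then [ker sigma j \subset ker sigma i],
   so [sigma i] could be dropped. *)
Lemma U_subset_eq i j : U i `<=` U j -> i = j.
Proof.
move=> hij; apply/eqP; apply: contrapT => /negP ne.
apply: (irredundant (j := i)) => r1 r2 h; apply: cond2_inj => k.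
have [->|nk] := eqVneq k i; last exact: h.
have hj : sigma j (r1 - r2) = 0 by rewrite rmorphB h 1?eq_sym // subrr.
apply/eqP; rewrite -subr_eq0 -rmorphB; apply: contrapT => /negP hnz.
by have /unit_preimE := hij _ (proj2 (unit_preimE _ _) hnz); rewrite hj eqxx.
Qed.

Lemma U_maxDen i : maxDen_l R (U i).
Proof.
split=> [|T hT hsub]; first exact: left_den_U.
have [j hj] := left_den_sub_U hT.
have eij := U_subset_eq (subset_trans hsub hj); subst j.
by apply/seteqP; split.
Qed.

Lemma cond2_maxDenE : maxDen_l R = [set U i | i in [set: 'I_n]].
Proof.
apply/seteqP; split=> [|_ [i _ <-]]; [exact: maxDen_sub_U | exact: U_maxDen].
Qed.

Lemma cond2_card_maxDen : (maxDen_l R #= `I_n)%card.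
Proof.
rewrite cond2_maxDenE; apply: card_eq_trans (card_esym card_II).
by apply: inj_card_eq => i j _ _ e; apply: U_subset_eq; rewrite e.
Qed.

End DivisionLocalizationFamily.

Inductive monoid_gen (R : pzRingType) (A : set R) : R -> Prop :=
| monoid_gen1 : monoid_gen A 1
| monoid_genM a m : A a -> monoid_gen A m -> monoid_gen A (a * m).

Section MonoidGen.
Variable R : pzRingType.
Implicit Types A S T : set R.

Lemma monoid_genMM A m1 m2 : monoid_gen A m1 -> monoid_gen A m2 -> monoid_gen A (m1 * m2).
Proof.
elim=> [|a m ha hm IH] h2; first by rewrite mul1r.
by rewrite -mulrA; apply: monoid_genM => //; exact: IH.
Qed.

Lemma sub_monoid_gen A : A `<=` monoid_gen A.
Proof. by move=> a ha; rewrite -[a]mulr1; apply: monoid_genM => //; exact: monoid_gen1. Qed.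

Lemma left_den_monoid_gen A :
  (forall a, A a -> forall r, exists u r', monoid_gen A u /\ u * r = r' * a) ->
  (forall a, A a -> forall r, r * a = 0 -> exists u, monoid_gen A u /\ u * r = 0) ->
  ~ monoid_gen A 0 -> left_den_set (monoid_gen A).
Proof.
move=> hO hR h0; split; [split; [split; [exact: monoid_gen1|split => //]|]|].
- by move=> a b; exact: monoid_genMM.
- move=> r s hs; elim: hs r => [|a m ha hm IH] r.
    by exists 1, r; split; [exact: monoid_gen1 | rewrite mul1r mulr1].
  have [u0 [r0 [hu0 e0]]] := IH r.
  have [u1 [r1 [hu1 e1]]] := hO a ha r0.
  exists (u1 * u0), r1; split; first exact: monoid_genMM.
  by rewrite -mulrA e0 mulrA e1 mulrA.
- move=> r s hs; elim: hs r => [|a m ha hm IH] r.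
    by rewrite mulr1 => ->; exists 1; split; [exact: monoid_gen1 | rewrite mulr0].
  rewrite mulrA => /IH [u0 [hu0 e0]].
  have [u1 [hu1 e1]] : exists u, monoid_gen A u /\ u * (u0 * r) = 0.
    by apply: (hR a ha (u0 * r)); rewrite -mulrA e0.
  by exists (u1 * u0); split; [exact: monoid_genMM | rewrite -mulrA].
Qed.

Lemma left_den_monoid_genU S T : left_den_set S -> left_den_set T ->
  ~ monoid_gen (S `|` T) 0 -> left_den_set (monoid_gen (S `|` T)).
Proof.
move=> hS hT; apply: left_den_monoid_gen => a [ha|ha] r.
- have [s' [r' [h e]]] := den_ore hS r ha.
  by exists s', r'; split => //; apply: sub_monoid_gen; left.
- have [s' [r' [h e]]] := den_ore hT r ha.
  by exists s', r'; split => //; apply: sub_monoid_gen; right.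
- move=> e; have [t [h e']] := den_rev hS ha e.
  by exists t; split => //; apply: sub_monoid_gen; left.
- move=> e; have [t [h e']] := den_rev hT ha e.
  by exists t; split => //; apply: sub_monoid_gen; right.
Qed.

Lemma left_den_bigcup (F : set (set R)) : F !=set0 -> F `<=` @left_den_set R ->
  total_on F subset -> left_den_set (\bigcup_(X in F) X).
Proof.
move=> [X0 FX0] Fden Ftot.
split; [split; [split; [|split]|]|].
- by exists X0 => //; apply: den1; exact: Fden.
- by move=> [X FX]; apply: den_not0; exact: Fden.
- move=> a b [X FX Xa] [Y FY Yb].
  have [XY|YX] := Ftot X Y FX FY.
    by exists Y => //; apply: (denM (Fden Y FY)) => //; exact: XY.
  by exists X => //; apply: (denM (Fden X FX)) => //; exact: YX.
- move=> r s [X FX Xs]; have [s' [r' [h e]]] := den_ore (Fden X FX) r Xs.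
  by exists s', r'; split => //; exists X.
- move=> r s [X FX Xs] e; have [t [h e']] := den_rev (Fden X FX) Xs e.
  by exists t; split => //; exists X.
Qed.

Lemma exists_maxDen T : left_den_set T -> exists S, maxDen_l R S /\ T `<=` S.
Proof.
move=> hT; pose P X := X = set0 \/ left_den_set X /\ T `<=` X.
have [F FP Ftot|A [PA Amax]] := @Zorn_bigcup R P.
  pose G := [set X | F X /\ left_den_set X].
  have -> : \bigcup_(X in F) X = \bigcup_(X in G) X.
    apply/seteqP; split=> x [X FX Xx]; exists X => //; last by case: FX.
    by split=> //; case: (FP X FX) => [X0|[]//]; rewrite X0 in Xx.
  have [[X0 GX0]|G0] := pselect (G !=set0); last first.
    left; apply/seteqP; split=> // x [X GX _]; apply: G0; by exists X.
  right; split.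
    apply: left_den_bigcup => [|X []//|X Y [FX _] [FY _]]; [by exists X0 | exact: Ftot].
  case: (GX0) => FX0 hX0; case: (FP X0 FX0) => [X00|[_ TX0] x Tx].
    by move: (den1 hX0); rewrite X00.
  by exists X0 => //; exact: TX0.
have [A0|[hA TA]] := PA.
  exfalso; apply: (Amax T); last by right; split.
  by rewrite A0; split => // /(_ 1 (den1 hT)).
exists A; split => //; split => // B hB AB.
apply: contrapT => BA; apply: (Amax B); last by right; split => //; exact: subset_trans AB.
by split => // BA'; apply: BA; apply/seteqP.
Qed.

End MonoidGen.

Section ReducedRing.
Variable R : pzRingType.
Hypothesis sqr_eq0 : forall x : R, x * x = 0 -> x = 0.

Lemma mul_eq0C (a b : R) : a * b = 0 -> b * a = 0.
Proof. by move=> e; apply: sqr_eq0; rewrite mulrA -(mulrA b) e mulr0 mul0r. Qed.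

Lemma mul_eq0_mid (a b r : R) : a * b = 0 -> a * r * b = 0.
Proof.
move=> e; apply: sqr_eq0.
by rewrite -!mulrA (mulrA b) (mul_eq0C e) mul0r !mulr0.
Qed.

Lemma mul_eq0_swap (a b c : R) : a * b * c = 0 -> a * c * b = 0.
Proof.
move=> e; apply: sqr_eq0.
have e' : c * b * a * c * b = 0.
  by apply: mul_eq0_mid; rewrite -mulrA; apply: mul_eq0_mid; exact: mul_eq0C e.
have -> : a * c * b * (a * c * b) = a * (c * b * a * c * b) by rewrite !mulrA.
by rewrite e' mulr0.
Qed.

Lemma mul_eq0_swap_mid (x a b y : R) : x * a * b * y = 0 -> x * b * a * y = 0.
Proof.
move=> e; apply: mul_eq0C; rewrite !mulrA; apply: mul_eq0_swap.
by rewrite -!mulrA; apply: mul_eq0C; rewrite !mulrA.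
Qed.

(* In a reduced ring a vanishing product of generators of [S \cup T] can be
   rearranged into a vanishing product [s t] with [s \in S], [t \in T]. *)
Lemma monoid_genU_eq0 (S T : set R) : left_den_set S -> left_den_set T ->
  monoid_gen (S `|` T) 0 -> exists s t, [/\ S s, T t & s * t = 0].
Proof.
move=> hS hT.
suff gen_split m : monoid_gen (S `|` T) m -> exists s t,
    [/\ S s, T t & forall r, r * m = 0 -> r * s * t = 0].
  move=> /gen_split [s [t [hs ht hr]]]; exists s, t; split => //.
  by rewrite -[s]mul1r; apply: hr; rewrite mulr0.
elim=> [|a {}m [ha|ha] _ [s [t [hs ht IH]]]].
- by exists 1, 1; split; [exact: den1 | exact: den1 | move=> r; rewrite !mulr1].
- exists (a * s), t; split => //; first exact: denM.
  by move=> r; rewrite mulrA => /IH; rewrite mulrA.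
- exists s, (a * t); split => //; first exact: denM.
  by move=> r; rewrite mulrA => /IH e; rewrite mulrA; exact: mul_eq0_swap_mid.
Qed.

End ReducedRing.

Section LeftLocalizable.
Variable R : pzRingType.
Hypothesis Hloc : left_localizable R.

Lemma localizable_sqr_eq0 (x : R) : x * x = 0 -> x = 0.
Proof.
move=> e; apply: contrapT => /eqP x0; have [S [hS hx]] := Hloc x0.
by apply: (den_not0 hS); rewrite -e; exact: denM.
Qed.

(* Otherwise the monoid generated by [S \cup S'] would be a larger left
   denominator set. *)
Lemma maxDen_meet_ass S S' : maxDen_l R S -> maxDen_l R S' -> S <> S' ->
  exists x, S x /\ ass S' x.
Proof.
move=> [hS mS] [hS' mS'] SS'; apply: contrapT => hdis; apply: SS'.
have hG : left_den_set (monoid_gen (S `|` S')).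
  apply: left_den_monoid_genU => // /(monoid_genU_eq0 localizable_sqr_eq0 hS hS').
  move=> [s [t [hs ht e]]]; have [t' [ht' e']] := den_rev hS' ht e.
  by apply: hdis; exists s; split => //; exists t'.
have <- : monoid_gen (S `|` S') = S.
  by apply: mS => // x hx; apply: sub_monoid_gen; left.
by apply: mS' => // x hx; apply: sub_monoid_gen; right.
Qed.

Section FiniteMaxDen.
Variables (n : nat) (f : 'I_n -> set R).
Hypothesis Hf : maxDen_l R = [set f i | i in [set: 'I_n]].

Lemma maxDen_enum j : maxDen_l R (f j).
Proof. by rewrite Hf; exists j. Qed.

Lemma maxDen_cover y : y != 0 -> exists j, f j y.
Proof.
move=> y0; have [T [hT Ty]] := Hloc y0.
have [S [hS TS]] := exists_maxDen hT.
by move: hS; rewrite Hf => -[j _ e]; exists j; rewrite e; exact: TS.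
Qed.

Variable S : set R.
Hypothesis hSm : maxDen_l R S.
Let hS : left_den_set S := proj1 hSm.

Lemma exists_den_ass_others : exists c, S c /\ forall j, f j <> S -> ass (f j) c.
Proof.
have /choice [c hc] : forall j, exists c, S c /\ (f j <> S -> ass (f j) c).
  move=> j; have [e|ne] := pselect (f j = S); first by exists 1; split => //; exact: den1.
  have [x [Sx ax]] := maxDen_meet_ass hSm (maxDen_enum j) (nesym ne).
  by exists x.
exists (\prod_(i < n) c i); split; first by apply: den_prod => // i; case: (hc i).
move=> j ne; have hj := ass_ideal (proj1 (maxDen_enum j)).
apply: (prod_mem_ideal (j := j)); [exact: RingQuot.idealMl | exact: RingQuot.idealMr |].
by case: (hc j) => _; apply.
Qed.

Section Separator.
Variable c : R.
Hypothesis hc : S c.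
Hypothesis hc_ass : forall j, f j <> S -> ass (f j) c.

(* [c y != 0] lies in some maximal [f j], which can only be [S]
   since [c \in ass (f j)] otherwise. *)
Lemma den_mul_notin_ass y : ~ ass S y -> S (c * y).
Proof.
move=> hy; have cy0 : c * y != 0 by apply/eqP => e; apply: hy; exists c.
have [j hj] := maxDen_cover cy0.
have [<-|ne] := pselect (f j = S) => //.
have hfj := proj1 (maxDen_enum j).
by exfalso; apply: (den_notin_ass hfj hj); apply: RingQuot.idealMr (hc_ass ne); exact: ass_ideal.
Qed.

Lemma notin_assM y z : ~ ass S y -> ~ ass S z -> ~ ass S (y * z).
Proof.
move=> hy hz hyz; have hcy := den_mul_notin_ass hy.
have [t [ht e]] : ass S (c * y * z).
  by rewrite -mulrA; apply: RingQuot.idealMl hyz; exact: ass_ideal.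
by apply: hz; exists (t * (c * y)); split; [exact: denM | rewrite -mulrA].
Qed.

(* [S] is maximal and the monoid generated by [S] and [x] is a left
   denominator set, whose Ore condition for [x] follows from [c x \in S]. *)
Lemma notin_ass_den x : ~ ass S x -> S x.
Proof.
move=> hx; pose A := S `|` [set x].
have hG : left_den_set (monoid_gen A).
  apply: left_den_monoid_gen.
  - move=> a [ha|->] r.
      have [s' [r' [h e]]] := den_ore hS r ha.
      by exists s', r'; split => //; apply: sub_monoid_gen; left.
    have [s' [r' [h e]]] := den_ore hS r (den_mul_notin_ass hx).
    exists s', (r' * c); split; first by apply: sub_monoid_gen; left.
    by rewrite e mulrA.
  - move=> a [ha|->] r e.
      have [t [h e']] := den_rev hS ha e.
      by exists t; split => //; apply: sub_monoid_gen; left.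
    have [s' [r' [h e1]]] := den_ore hS r hc.
    have e2 : r' * (c * x) = 0 by rewrite mulrA -e1 -mulrA e mulr0.
    have [t [ht e3]] := den_rev hS (den_mul_notin_ass hx) e2.
    exists (t * s'); split; first by apply: sub_monoid_gen; left; exact: denM.
    by rewrite -mulrA e1 mulrA e3 mul0r.
  - suff gen_notin m : monoid_gen A m -> ~ ass S m.
      by move=> /gen_notin; apply; exact: RingQuot.ideal0 (ass_ideal hS).
    elim=> [|a m0 ha _ IH]; first by apply: den_notin_ass => //; exact: den1.
    apply: notin_assM => //; case: ha => [ha|->] //; exact: den_notin_ass.
have <- : monoid_gen A = S by apply: (proj2 hSm) => // y hy; apply: sub_monoid_gen; left.
by apply: sub_monoid_gen; right.
Qed.

End Separator.

Lemma maxDen_notin_ass x : ~ ass S x -> S x.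
Proof.
by move=> hx; have [c [hc hc_ass]] := exists_den_ass_others; exact (notin_ass_den hc hc_ass hx).
Qed.

End FiniteMaxDen.
End LeftLocalizable.

(* [R / ass S] is a left Ore domain whose nonzero elements all come from [S],
   so its division ring of left fractions is [S^-1 R]. *)
Section DivisionLocalization.
Variables (R : pzRingType) (S : set R).
Hypotheses (hS : left_den_set S) (hSc : forall x, ~ ass S x -> S x).

Local Notation D := (RingQuot.type (ass_ideal hS)).
Local Notation proj := (@RingQuot.proj _ _ (ass_ideal hS)).

Lemma proj_eq0 r : proj r = 0 <-> ass S r.
Proof. exact: RingQuot.proj_eq0. Qed.

Lemma proj_den_neq0 s : S s -> proj s != 0.
Proof. by move=> Ss; apply/eqP => /proj_eq0; exact: den_notin_ass. Qed.

Lemma quot_mul_eq0 (a b : D) : a * b = 0 -> a = 0 \/ b = 0.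
Proof.
have [x ->] := RingQuot.proj_surj a; have [y ->] := RingQuot.proj_surj b.
rewrite -rmorphM !proj_eq0 => hxy.
have [hx|/hSc Sx] := pselect (ass S x); first by left.
have [hy|/hSc Sy] := pselect (ass S y); first by right.
by exfalso; apply: (den_notin_ass hS _ hxy); exact: denM.
Qed.

Lemma quot_left_ore (a b : D) : b != 0 -> exists u v, u != 0 /\ u * a = v * b.
Proof.
have [r ->] := RingQuot.proj_surj a; have [s ->] := RingQuot.proj_surj b.
move=> /eqP hs; have Ss : S s by apply: hSc => /proj_eq0.
have [s' [r' [hs' e]]] := den_ore hS r Ss.
exists (proj s'), (proj r'); split; first exact: proj_den_neq0.
by rewrite -!rmorphM e.
Qed.

Local Notation frac := (LeftOreFrac.tofr quot_mul_eq0 quot_left_ore).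

Definition frac_ring : unitRingType := LeftOreFrac.type quot_mul_eq0 quot_left_ore.
Definition frac_mor : {rmorphism R -> frac_ring} := frac \o proj.

Lemma frac_mor_eq0 r : frac_mor r = 0 <-> ass S r.
Proof.
split=> [e|/proj_eq0 e]; last by rewrite /= e rmorph0.
by apply/proj_eq0/(@LeftOreFrac.tofr_inj _ quot_mul_eq0 quot_left_ore); rewrite rmorph0.
Qed.

Lemma frac_mor_loc : is_left_localization S frac_mor.
Proof.
split; [|split].
- by move=> s Ss; rewrite /= LeftOreFrac.tofr_unit proj_den_neq0.
- move=> q; have [s0 [r0 [s00 ->]]] := LeftOreFrac.tofr_frac q.
  have [s es] := RingQuot.proj_surj s0; have [r er] := RingQuot.proj_surj r0.
  exists s, r; split; last by rewrite es er.
  by apply: hSc => /proj_eq0 s0'; move: s00; rewrite es s0' eqxx.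
- exact: frac_mor_eq0.
Qed.

Lemma frac_ring_division : division_ring frac_ring.
Proof. exact: LeftOreFrac.neq0_unit. Qed.

End DivisionLocalization.

Lemma finite_set_enum (T : Type) (M : set (set T)) : finite_set M ->
  exists n (f : 'I_n -> set T), M = [set f i | i in [set: 'I_n]].
Proof.
move=> [n /card_esym hM]; exists n.
have /pcard_eqP/bijPex[g [gM _ gsurj]] := card_eq_trans (card_esym card_II) hM.
by exists g; apply/seteqP; split=> // _ [i _ <-]; exact: gM.
Qed.

Lemma finite_maxDen_cond2 (R : pzRingType) :
  left_localizable R -> finite_set (maxDen_l R) ->
  exists (n : nat) (S' : 'I_n -> set R) (Q : 'I_n -> unitRingType)
    (sigma : forall i, {rmorphism R -> Q i}), cond2_data S' sigma.
Proof.
move=> Hloc /finite_set_enum [n [f Hf]].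
pose hden i := proj1 (maxDen_enum Hf i).
pose hcompl i := maxDen_notin_ass Hloc Hf (maxDen_enum Hf i).
exists n, f, (fun i => frac_ring (hden i) (hcompl i)),
  (fun i => frac_mor (hden i) (hcompl i)).
split; [by [] | split; [|split]] => [i|i|r1 r2 h].
- exact: frac_mor_loc.
- exact: frac_ring_division.
apply/eqP; rewrite -subr_eq0; apply/negP => /negP /(maxDen_cover Hloc Hf) [j hj].
apply: (den_notin_ass (hden j) hj); apply/(frac_mor_eq0 (hden j) (hcompl j)).
by rewrite rmorphB h subrr.
Qed.

Theorem theorem3p8 (R : pzRingType) :
  ((left_localizable R /\ finite_set (maxDen_l R)) <->
   (exists (n : nat) (S' : 'I_n -> set R) (Q : 'I_n -> unitRingType)
      (sigma : forall i, {rmorphism R -> Q i}), cond2_data S' sigma)) /\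
  (forall (n : nat) (S' : 'I_n -> set R) (Q : 'I_n -> unitRingType)
      (sigma : forall i, {rmorphism R -> Q i}),
    cond2_data S' sigma ->
    (forall j : 'I_n, ~ (forall r1 r2 : R,
        (forall i, i != j -> sigma i r1 = sigma i r2) -> r1 = r2)) ->
    (maxDen_l R #= `I_n)%card /\
    maxDen_l R = [set [set r | sigma i r \is a GRing.unit] | i in [set: 'I_n]]).
Proof.
split; first split.
- by move=> [Hloc Hfin]; exact: finite_maxDen_cond2.
- move=> [n [S' [Q [sigma H]]]].
  by split; [exact: cond2_localizable H | exact: cond2_finite_maxDen H].
- move=> n S' Q sigma H Hmin.
  by split; [exact: cond2_card_maxDen H Hmin | exact: cond2_maxDenE H Hmin].
Qed.
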